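(* Let $\mathcal{X}$ and $\mathcal{Y}$ be finite additive groups, let $n,m\ge 1$, and let $F:\mathcal{X}^n\to\mathcal{Y}^m$ be a random function (a random variable taking values in the set of all maps $\mathcal{X}^n\to\mathcal{Y}^m$). Let $\Sigma_n$ and $\Sigma_m$ be uniformly distributed random permutations of the $n$ coordinates of $\mathcal{X}^n$ and of the $m$ coordinates of $\mathcal{Y}^m$, respectively, with $\Sigma_n$, $\Sigma_m$, $F$ mutually independent, and set $\tilde F=\Sigma_m\circ F\circ\Sigma_n$. Then for every $\mathbf{x}\in\mathcal{X}^n$ and $\mathbf{y}\in\mathcal{Y}^m$, $$\Pr\{\tilde F(\mathbf{x})=\mathbf{y}\}=|\mathcal{Y}|^{-m}\,\alpha(F)(P_{\mathbf{x}},P_{\mathbf{y}}).$$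
   Context: For a sequence $\mathbf{x}\in\mathcal{X}^n$, its type $P_{\mathbf{x}}$ is the distribution on $\mathcal{X}$ given by $P_{\mathbf{x}}(a)=N(a|\mathbf{x})/n$, where $N(a|\mathbf{x})$ is the number of occurrences of $a$ in $\mathbf{x}$; $\mathcal{P}_n(\mathcal{X})$ denotes the set of types of sequences in $\mathcal{X}^n$ (similarly for $\mathcal{Y}^m$). A permutation of coordinates acts on $\mathcal{X}^n$ by permuting the entries of a sequence. For a (deterministic) map $f:\mathcal{X}^n\to\mathcal{Y}^m$, its joint spectrum is $S_{\mathcal{X}\mathcal{Y}}(f)(P,Q)=|\{\mathbf{x}\in\mathcal{X}^n: P_{\mathbf{x}}=P,\ P_{f(\mathbf{x})}=Q\}|/|\mathcal{X}|^n$. For $P\in\mathcal{P}_n(\mathcal{X})$, $Q\in\mathcal{P}_m(\mathcal{Y})$, set $\binom{n}{nP}=n!/\prod_{a\in\mathcal{X}}(nP(a))!$, $\binom{m}{mQ}=m!/\prod_{b\in\mathcal{Y}}(mQ(b))!$, and for a random map $F$ define $$\alpha(F)(P,Q)=\frac{E[S_{\mathcal{X}\mathcal{Y}}(F)(P,Q)]}{\binom{n}{nP}\binom{m}{mQ}\,|\mathcal{X}|^{-n}|\mathcal{Y}|^{-m}}.$$ *)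

From HB Require Import structures.
From mathcomp Require Import all_boot all_order all_fingroup all_algebra.
Set Implicit Arguments. Unset Strict Implicit. Unset Printing Implicit Defensive.
Import Order.TTheory GRing.Theory Num.Theory.
Local Open Scope ring_scope.

Section Defs.
Variable R : archiRealFieldType.

Definition vecn (X : finType) (n : nat) := {ffun 'I_n -> X}.

Definition ptype (X : finType) (n : nat) (x : vecn X n) : {ffun X -> R} :=
  [ffun a => (#|[set i | x i == a]|)%:R / n%:R].

Definition multinom (X : finType) (n : nat) (P : {ffun X -> R}) : R :=
  (n`!)%:R / \prod_(a : X) ((Num.truncn (n%:R * P a))`!)%:R.

Definition joint_spectrum (X Y : finType) (n m : nat)
  (f : vecn X n -> vecn Y m) (P : {ffun X -> R}) (Q : {ffun Y -> R}) : R :=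
  #|[set x : vecn X n | (ptype x == P) && (ptype (f x) == Q)]|%:R
    / (#|X| ^ n)%:R.

(* a random map F is given by its probability mass function pF on the finite
   set of all maps X^n -> Y^m *)
Definition is_pmf (T : finType) (p : T -> R) :=
  (forall t, 0 <= p t) /\ \sum_(t : T) p t = 1.

Definition alpha (X Y : finType) (n m : nat)
  (pF : {ffun vecn X n -> vecn Y m} -> R) (P : {ffun X -> R}) (Q : {ffun Y -> R}) : R :=
  (\sum_(f : {ffun vecn X n -> vecn Y m}) pF f * joint_spectrum f P Q)
  / (multinom n P * multinom m Q * ((#|X| ^ n)%:R)^-1 * ((#|Y| ^ m)%:R)^-1).

Definition permute (X : finType) (n : nat) (s : 'S_n) (x : vecn X n) : vecn X n :=
  [ffun i => x (s i)].

(* Pr{ Sigma_m o F o Sigma_n (x) = y } with Sigma_n, Sigma_m uniform on the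
   symmetric groups and Sigma_n, Sigma_m, F mutually independent
   (joint law = product of the marginals) *)
Definition prob_tilde (X Y : finType) (n m : nat)
  (pF : {ffun vecn X n -> vecn Y m} -> R) (x : vecn X n) (y : vecn Y m) : R :=
  \sum_(s : 'S_n) \sum_(t : 'S_m) \sum_(f : {ffun vecn X n -> vecn Y m})
    ((#|'S_n|%:R)^-1 * (#|'S_m|%:R)^-1 * pF f) *
    (permute t (f (permute s x)) == y)%:R.
End Defs.

(* Averaging over coordinate permutations makes the law of F~(x) depend on x
   and y only through their types.  The number of s in S_n with x o s = z is
   prod_a N(a|x)! = n! / multinom n P_x when P_z = P_x, and 0 otherwise, so
   summing over s and t turns Pr{F~(x) = y} into
   E |{z : P_z = P_x, P_F(z) = P_y}| / (multinom n P_x * multinom m P_y),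
   which is |Y|^-m alpha(F)(P_x, P_y).  The permutation count is the case
   D = T of the number prod_a |c^-1(a)| ^_ |d^-1(a)| of injections
   f : D -> T with c o f = d. *)

From mathcomp Require Import all_boot all_order all_fingroup all_algebra.
From mathcomp Require Import ring.
Import Order.TTheory GRing.Theory Num.Theory.
Set Implicit Arguments. Unset Strict Implicit. Unset Printing Implicit Defensive.

Lemma count_codom (D X : finType) (d : D -> X) a :
  count_mem a (codom d) = #|[set i | d i == a]|.
Proof.
by rewrite count_map cardE size_filter -enumT; apply: eq_count => i; rewrite !inE.
Qed.

Section ColoredInjections.
Variables (T X : finType) (c : T -> X).

Lemma card_colored_uniq_tuples (A : pred T) n (ds : n.-tuple X) :
  #|[set t : n.-tuple T | [&& all A t, uniq t & map c t == ds :> seq X]]| =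
  \prod_a #|[predI A & [pred u | c u == a]]| ^_ count_mem a ds.
Proof.
elim: n A ds => [|n IHn] A ds.
  rewrite tuple0 big1 // (@eq_card1 _ [tuple]) // => t.
  by rewrite [t]tuple0 !inE.
case/tupleP: ds => a0 ds.
rewrite -sum1dep_card (partition_big (@thead _ _) [predI A & [pred u | c u == a0]]) /=;
  last first.
  case/tupleP=> u t /and3P[/andP[Au _] _ /eqP[<- _]].
  by rewrite theadE !inE eqxx andbT; exact: Au.
rewrite (eq_bigr (fun=> \prod_a
    (#|[predI A & [pred v | c v == a]]| - (a0 == a)) ^_ count_mem a ds)); last first.
  move=> u /andP[Au /eqP cu].
  have card_pool a : #|[predI [predD1 A & u] & [pred v | c v == a]]| =
      #|[predI A & [pred v | c v == a]]| - (a0 == a).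
    rewrite [in RHS](cardD1 u) !inE Au cu /=.
    by case: eqP => _; rewrite ?subn1 ?subn0 //=; apply: eq_card => v;
      rewrite !inE andbA.
  under [RHS]eq_bigr => a _ do rewrite -card_pool.
  rewrite -IHn -sum1dep_card (reindex (fun t : n.-tuple T => [tuple of u :: t])) /=.
    apply: eq_bigl => t; rewrite -[A u]/(u \in A) Au cu eqseq_cons eqxx theadE eqxx.
    by rewrite andbT /= all_predI all_predC has_pred1 -!andbA andbCA.
  exists (fun t : n.+1.-tuple T => [tuple of behead t]) => [t _|t /andP[_ /eqP <-]].
    exact: val_inj.
  by rewrite -tuple_eta.
rewrite sum_nat_const (bigD1 a0) //= [RHS](bigD1 a0) //= eqxx subn1 mulnA -ffactnS.
congr (_ * _); apply: eq_bigr => a /negbTE na0.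
by rewrite eq_sym na0 subn0.
Qed.

Lemma card_colored_inj_ffuns (D : finType) (d : D -> X) :
  #|[set f : {ffun D -> T} | injectiveb f && [forall i, c (f i) == d i]]| =
  \prod_a #|[set u | c u == a]| ^_ #|[set i | d i == a]|.
Proof.
transitivity (\prod_a #|[predI predT & [pred u | c u == a]]| ^_
                        count_mem a (codom_tuple d)); last first.
  apply: eq_bigr => a _; rewrite count_codom; congr (_ ^_ _).
  by apply: eq_card => u; rewrite !inE.
rewrite -card_colored_uniq_tuples -(card_imset _ (can_inj FinfunK)).
rewrite (can2_imset_pre _ FinfunK fgraphK); apply: eq_card => f; rewrite !inE /=.
rewrite all_predT -map_comp; congr (_ && _).
apply/forallP/eqP => [colored | /eq_in_map colored i].
  by apply/eq_in_map => i _; apply/eqP/colored.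
by apply/eqP/colored; rewrite mem_enum.
Qed.

End ColoredInjections.

Lemma card_perm_fibers (D X : finType) (w w' : D -> X) :
  #|[set s : {perm D} | [forall i, w (s i) == w' i]]| =
  \prod_a #|[set i | w i == a]| ^_ #|[set i | w' i == a]|.
Proof.
rewrite -card_colored_inj_ffuns -(card_imset _ val_inj); apply: eq_card => f.
rewrite inE; apply/imsetP/andP => [[s] | [injf colored]].
  by rewrite inE => colored ->; split; [case: s {colored} | rewrite pvalE].
by exists (Perm injf); rewrite // inE -pvalE.
Qed.

Local Open Scope ring_scope.

Section TypeClasses.
Variables (R : archiRealFieldType) (X : finType) (n : nat).

Definition multinom_den (P : {ffun X -> R}) : nat :=
  \prod_a (Num.truncn (n%:R * P a))`!.

Lemma multinom_den_gt0 (P : {ffun X -> R}) : (0 < multinom_den P)%N.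
Proof. by rewrite prodn_gt0 // => a; rewrite fact_gt0. Qed.

Lemma multinomE (P : {ffun X -> R}) :
  multinom n P = n`!%:R / (multinom_den P)%:R.
Proof. by rewrite /multinom natr_prod. Qed.

Lemma ptype_permute (s : 'S_n) (w : vecn X n) :
  ptype R (permute s w) = ptype R w.
Proof.
apply/ffunP => a; rewrite !ffunE -[in RHS](card_preimset _ (@perm_inj _ s)).
by congr (_%:R / _); apply: eq_card => i; rewrite !inE ffunE.
Qed.

Hypothesis n_gt0 : (0 < n)%N.

Lemma truncn_ptype (w : vecn X n) a :
  Num.truncn (n%:R * ptype R w a) = #|[set i | w i == a]|.
Proof. by rewrite ffunE mulrC divfK ?natrK // pnatr_eq0 -lt0n. Qed.

Lemma ptype_eqE (w w' : vecn X n) :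
  (ptype R w == ptype R w') =
  [forall a, #|[set i | w i == a]| == #|[set i | w' i == a]|].
Proof.
apply/eqP/forallP => [eq_ww' a | eq_cards].
  by rewrite -truncn_ptype eq_ww' truncn_ptype.
by apply/ffunP => a; rewrite !ffunE; congr (_%:R / _); apply/eqP.
Qed.

Lemma card_permute_eq (w w' : vecn X n) :
  #|[set s : 'S_n | permute s w == w']| =
  ((ptype R w == ptype R w') * multinom_den (ptype R w))%N.
Proof.
have [eq_ww' | neq_ww'] := boolP (ptype R w == ptype R w'); last first.
  apply/eqP; rewrite mul0n cards_eq0; apply/eqP/setP => s; rewrite !inE.
  by apply: contraNF neq_ww' => /eqP <-; rewrite ptype_permute.
have -> : [set s : 'S_n | permute s w == w'] =
          [set s : 'S_n | [forall i, w (s i) == w' i]].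
  apply/setP => s; rewrite !inE; apply/eqP/forallP => [<- i | ww'].
    by rewrite ffunE.
  by apply/ffunP => i; rewrite ffunE; apply/eqP.
rewrite mul1n card_perm_fibers; apply: eq_bigr => a _.
move: eq_ww'; rewrite ptype_eqE truncn_ptype => /forallP/(_ a)/eqP <-.
by rewrite ffactnn.
Qed.

Lemma sum_permute_eq (w w' : vecn X n) :
  \sum_(s : 'S_n) ((permute s w == w')%:R : R) =
  (ptype R w == ptype R w')%:R * (multinom_den (ptype R w'))%:R.
Proof.
transitivity (#|[set s : 'S_n | permute s w == w']|%:R : R).
  by rewrite -sum1dep_card natr_sum [RHS]big_mkcond; apply: eq_bigr => s _; case: eqP.
by rewrite card_permute_eq natrM; case: eqP => [->|_]; rewrite ?mul0r.
Qed.

Lemma sum_permute (G : vecn X n -> R) (w : vecn X n) :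
  \sum_(s : 'S_n) G (permute s w) =
  (multinom_den (ptype R w))%:R * \sum_(z | ptype R z == ptype R w) G z.
Proof.
rewrite (partition_big (fun s : 'S_n => permute s w) predT) //= mulr_sumr.
rewrite [RHS]big_mkcond; apply: eq_bigr => z _.
rewrite (eq_bigr (fun=> G z)) => [|s /eqP <- //].
rewrite big_mkcond (eq_bigr (fun s => (permute s w == z)%:R * G z)) => [|s _].
  rewrite -mulr_suml sum_permute_eq eq_sym.
  by case: eqP => [->|_]; rewrite ?mul1r ?mul0r.
by case: eqP => _; rewrite ?mul1r ?mul0r.
Qed.

End TypeClasses.

Lemma sum_permute_map (R : archiRealFieldType) (X Y : finType) (n m : nat)
    (n_gt0 : (0 < n)%N) (m_gt0 : (0 < m)%N)
    (f : vecn X n -> vecn Y m) (x : vecn X n) (y : vecn Y m) :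
  \sum_(s : 'S_n) \sum_(t : 'S_m) ((permute t (f (permute s x)) == y)%:R : R) =
  #|[set z | (ptype R z == ptype R x) && (ptype R (f z) == ptype R y)]|%:R *
  (multinom_den n (ptype R x) * multinom_den m (ptype R y))%:R.
Proof.
under eq_bigr do rewrite sum_permute_eq //.
rewrite (sum_permute n_gt0 (fun z => (ptype R (f z) == ptype R y)%:R * _)).
rewrite -mulr_suml natrM.
have -> : \sum_(z | ptype R z == ptype R x) ((ptype R (f z) == ptype R y)%:R : R) =
    #|[set z | (ptype R z == ptype R x) && (ptype R (f z) == ptype R y)]|%:R.
  rewrite -sum1dep_card natr_sum big_mkcondr; apply: eq_bigr => z _.
  by case: eqP.
by rewrite mulrCA mulrA.
Qed.

Theorem proposition3 (R : archiRealFieldType) (X Y : finZmodType) (n m : nat)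
  (hn : (1 <= n)%N) (hm : (1 <= m)%N)
  (pF : {ffun vecn X n -> vecn Y m} -> R) (hpF : is_pmf pF)
  (x : vecn X n) (y : vecn Y m) :
  prob_tilde pF x y =
    ((#|Y| ^ m)%:R)^-1 * alpha pF (ptype R x) (ptype R y).
Proof.
(* Both sides are linear in pF. *)
pose C (f : {ffun vecn X n -> vecn Y m}) :=
  #|[set z | (ptype R z == ptype R x) && (ptype R (f z) == ptype R y)]|.
have natr_neq0 k : (0 < k)%N -> k%:R != 0 :> R by rewrite pnatr_eq0 -lt0n.
have card_exp_gt0 (Z : finZmodType) k : (0 < #|Z| ^ k)%N.
  by rewrite expn_gt0; apply/orP; left; apply/card_gt0P; exists 0.
rewrite /prob_tilde; under eq_bigr do rewrite exchange_big; rewrite exchange_big /=.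
under eq_bigr => f _ do under eq_bigr => s _ do rewrite -mulr_sumr.
under eq_bigr => f _ do rewrite -mulr_sumr sum_permute_map //.
rewrite /alpha /joint_spectrum !multinomE !card_Sn.
set dx := multinom_den n _; set dy := multinom_den m _.
rewrite (eq_bigr (fun f => n`!%:R^-1 / m`!%:R * (dx * dy)%:R * (pF f * (C f)%:R)));
  last by move=> f _; ring.
under [in RHS]eq_bigr do rewrite mulrA.
rewrite -mulr_sumr -mulr_suml.
field.
by rewrite !natr_neq0 ?fact_gt0 ?multinom_den_gt0 ?card_exp_gt0.
Qed.
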